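(* Let $n \ge k \ge 1$ be integers, $s \in (0,1)$, $q = 1-s$, $r = q/s$, and let $S$ and $P=(p_{xy})$ be as in the context. Let $W^b \in S$ be a state with exactly $b$ entries equal to $1^*$, and let $W \in S$ be the state obtained from $W^b$ by replacing every entry $1^*$ by $1$ (same physical configuration, no blockages). Let $(\xi_x)_{x \in S}$ be any density on $S$ and let $\alpha = \sum_{x \in S} \xi_x p_{xW}$ be the total density transitioned into $W$. Then the total density transitioned into $W^b$ is $\sum_{x \in S} \xi_x p_{xW^b} = r^b \alpha$.
   Context: Let $1^*$ be a formal symbol with $|1^*| := 1$ and $|m| := m$ for positive integers $m$. The state space $S$ is the set of $k$-tuples $x=(x_1,\dots,x_k)$ with each $x_i \in \{1^*,1,2,\dots,n-k+1\}$, $\sum_{i=1}^k |x_i| = n$ and at most $k-1$ entries equal to $1^*$ (these describe distances between consecutive workers on a circle of $n$ bins, $1^*$ marking a blocked worker). $b(x)$ is the number of entries of $x$ equal to $1^*$ and $|x| = (|x_1|,\dots,|x_k|)$. For $\Delta=(d_1,\dots,d_k)\in\mathbb{Z}^k$ with $\sum d_i = 0$, let $\gamma_j = \sum_{i=1}^j d_i$ and $\phi(\Delta) = \sum_{j=1}^k(\gamma_j - \min_i \gamma_i)$. The transition probabilities of the warehouse Markov chain are $p_{xy} = r^{\,b(y)} \frac{s^k}{1-q^k} q^{\,\phi(|y|-|x|)}$ for $x,y \in S$. *)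

From HB Require Import structures.
From mathcomp Require Import all_boot all_order all_algebra.
Set Implicit Arguments. Unset Strict Implicit. Unset Printing Implicit Defensive.
Import Order.TTheory GRing.Theory Num.Theory.
Local Open Scope ring_scope.

(* An entry of a state: [None] is the formal symbol 1^*, [Some i] is the
   positive integer i+1, so entries range over {1^*, 1, ..., n-k+1}. *)
Definition entry (n k : nat) := option 'I_(n - k).+1.

Definition eabs n k (e : entry n k) : nat :=
  if e is Some i then (val i).+1 else 1%N.

Definition tup n k := {ffun 'I_k -> entry n k}.

Definition blocked n k (x : tup n k) : nat := #|[set i | x i == None]|.

Definition inS n k (x : tup n k) : bool :=
  ((\sum_(i < k) eabs (x i))%N == n) && (blocked x <= k.-1)%N.

Definition absdiff n k (x y : tup n k) (i : 'I_k) : int :=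
  (eabs (y i))%:Z - (eabs (x i))%:Z.

(* gamma_j = sum_{i <= j} d_i  (j = 1..k, 1-based) *)
Definition gamma k (d : 'I_k -> int) (j : nat) : int :=
  \sum_(i < k | (i < j)%N) d i.

Definition mingamma k (d : 'I_k -> int) : int :=
  \big[Num.min/gamma d k]_(1 <= j < k.+1) gamma d j.

Definition phi k (d : 'I_k -> int) : int :=
  \sum_(1 <= j < k.+1) (gamma d j - mingamma d).

Definition ptrans (R : realFieldType) (s : R) n k (x y : tup n k) : R :=
  let q := 1 - s in let r := q / s in
  r ^+ blocked y * (s ^+ k / (1 - q ^+ k)) * q ^ phi (absdiff x y).

Definition unblock n k (x : tup n k) : tup n k :=
  [ffun i => if x i is Some j then Some j else Some (inord 0)].

From HB Require Import structures.
From mathcomp Require Import all_boot all_order all_algebra.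
Import Order.TTheory GRing.Theory Num.Theory.
Local Open Scope ring_scope.

Lemma eq_phi k (d1 d2 : 'I_k -> int) : d1 =1 d2 -> phi d1 = phi d2.
Proof.
move=> eq_d.
have eq_gamma j : gamma d1 j = gamma d2 j.
  by apply: eq_bigr => i _; rewrite eq_d.
have eq_min : mingamma d1 = mingamma d2.
  by rewrite /mingamma eq_gamma; apply: eq_bigr => j _; rewrite eq_gamma.
by apply: eq_bigr => j _; rewrite eq_gamma eq_min.
Qed.

Lemma eabs_unblock n k (x : tup n k) i : eabs (unblock x i) = eabs (x i).
Proof. by rewrite ffunE; case: (x i) => //=; rewrite inordK. Qed.

Lemma blocked_unblock n k (x : tup n k) : blocked (unblock x) = 0%N.
Proof.
apply/eqP; rewrite cards_eq0; apply/eqP/setP => i.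
by rewrite !inE ffunE; case: (x i).
Qed.

Lemma phi_absdiff_unblock n k (x y : tup n k) :
  phi (absdiff x (unblock y)) = phi (absdiff x y).
Proof. by apply: eq_phi => i; rewrite /absdiff eabs_unblock. Qed.

Lemma ptrans_unblock (R : realFieldType) (s : R) n k (x y : tup n k) :
  ptrans s x y = ((1 - s) / s) ^+ blocked y * ptrans s x (unblock y).
Proof.
by rewrite /ptrans phi_absdiff_unblock blocked_unblock expr0 mul1r !mulrA.
Qed.

Theorem lemma1 (R : realFieldType) (n k : nat) (s : R)
  (hk : (1 <= k)%N) (hkn : (k <= n)%N) (hs0 : 0 < s) (hs1 : s < 1)
  (b : nat) (Wb : tup n k) (hWb : inS Wb) (hb : blocked Wb = b)
  (xi : tup n k -> R) (hxi : forall x, inS x -> 0 <= xi x) :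
  let q := 1 - s in let r := q / s in
  let alpha := \sum_(x | inS x) xi x * ptrans s x (unblock Wb) in
  \sum_(x | inS x) xi x * ptrans s x Wb = r ^+ b * alpha.
Proof.
move=> q r alpha; rewrite /alpha mulr_sumr; apply: eq_bigr => x _.
by rewrite ptrans_unblock hb mulrCA.
Qed.
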